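(* Consider Algorithm 1 with $x_0=0$, run on arbitrary vectors $g_t$ and non-negative learning rates $\eta_t$. For any $t\ge1$ and any $x^*\in\mathbb{R}^d$ there exists a number $\tilde x_t$ between $\|x^*\|$ and $\|x_t\|$ such that $$\frac{\|x^*-x_t\|^2}{S_{t-1}+2}\min\Big\{1,\frac1{\tilde x_t}\Big\}\le B_{\phi_t}(x^*,x_t)\le2\|x^*-x_t\|^2(S_{t-1}^2+Q_{t-1})\exp(Q_{t-1}),$$ with the convention $\min\{1,1/0\}=1$.
   Context: $\|\cdot\|$ is the Euclidean norm. For differentiable $f$, $B_f(x,y)=f(x)-f(y)-\langle\nabla f(y),x-y\rangle$. Auxiliary functions: $\psi^*(\theta,S,Q)=\exp\big(\max_{\beta\in[-1/2,1/2]}(\theta\beta-\beta^2S^2)-Q\big)$ for $\theta\in\mathbb{R},S>0,Q\ge0$; $\psi(x,S,Q)=\sup_{\theta\in\mathbb{R}}(\theta x-\psi^*(\theta,S,Q))$. Algorithm 1 with $x_0=0$: $S_0^2=4$, $Q_0=0$, $\theta_0=0$. For $t=1,2,\dots$: $\phi_t(x)=\psi(\|x\|,S_{t-1},Q_{t-1})$; $x_t$ is the unique minimizer of $\phi_t(x)-\langle\theta_{t-1},x\rangle$; receive $g_t$; $\ell_t=\eta_tg_t$, $S_t^2=S_{t-1}^2+\|\ell_t\|^2$ ($S_t>0$), $Q_t=Q_{t-1}+\|\ell_t\|^2/S_t^2$, $\theta_t=\theta_{t-1}-\ell_t$. *)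

From HB Require Import structures.
From mathcomp Require Import all_boot all_order all_algebra.
From mathcomp Require Import all_classical all_reals all_analysis.
Set Implicit Arguments. Unset Strict Implicit. Unset Printing Implicit Defensive.
Import Order.TTheory GRing.Theory Num.Theory.
Import numFieldNormedType.Exports.
Local Open Scope classical_set_scope.
Local Open Scope ring_scope.

Section Defs.
Variable R : realType.

Definition dotv (d : nat) (u v : 'rV[R]_d) : R := \sum_(i < d) u ord0 i * v ord0 i.
Definition enorm (d : nat) (u : 'rV[R]_d) : R := Num.sqrt (dotv u u).

(* Bregman divergence B_f(x,y) = f x - f y - <grad f(y), x - y>,
   the linear term written as the (Frechet) differential of f at y applied to x - y *)
Definition bregman (d : nat) (f : 'rV[R]_d -> R^o) (x y : 'rV[R]_d) : R :=
  f x - f y - 'd f y (x - y).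

Definition psistar (theta S Q : R) : R :=
  expR (sup [set theta * b - b ^+ 2 * S ^+ 2 | b in [set b : R | -(1/2) <= b <= 1/2]] - Q).

Definition psi (x S Q : R) : R :=
  sup [set theta * x - psistar theta S Q | theta in [set: R]].

(* Algorithm 1 state; g t and eta t are used for t >= 1 (index 0 unused). *)
Fixpoint Ssq (d : nat) (g : nat -> 'rV[R]_d) (eta : nat -> R) (t : nat) : R :=
  match t with
  | 0 => 4
  | s.+1 => Ssq g eta s + enorm (eta s.+1 *: g s.+1) ^+ 2
  end.

Definition Sv (d : nat) (g : nat -> 'rV[R]_d) (eta : nat -> R) (t : nat) : R :=
  Num.sqrt (Ssq g eta t).

Fixpoint Qv (d : nat) (g : nat -> 'rV[R]_d) (eta : nat -> R) (t : nat) : R :=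
  match t with
  | 0 => 0
  | s.+1 => Qv g eta s + enorm (eta s.+1 *: g s.+1) ^+ 2 / Ssq g eta s.+1
  end.

Fixpoint thetav (d : nat) (g : nat -> 'rV[R]_d) (eta : nat -> R) (t : nat) : 'rV[R]_d :=
  match t with
  | 0 => 0
  | s.+1 => thetav g eta s - eta s.+1 *: g s.+1
  end.

Definition phi (d : nat) (g : nat -> 'rV[R]_d) (eta : nat -> R) (t : nat)
  (x : 'rV[R]_d) : R^o :=
  psi (enorm x) (Sv g eta t.-1) (Qv g eta t.-1).

Definition min1inv (x : R) : R := if x == 0 then 1 else Num.min 1 x^-1.

End Defs.

From HB Require Import structures.
From mathcomp Require Import all_boot all_order all_algebra.
From mathcomp Require Import all_classical all_reals all_analysis.
From mathcomp Require Import ring lra.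
Import Order.TTheory GRing.Theory Num.Theory.
Import numFieldNormedType.Exports.
Local Open Scope ring_scope.

(* phi_t(x) = psi(|x|, S, Q) with S = S_{t-1}, Q = Q_{t-1} is radial.  With
   a = S^2 >= 4, the inner supremum of psistar is a Huber function, so
   psistar(theta) = e^{-Q} exp(huber |theta|); its derivative grad on [0, +oo) is an
   increasing bijection whose inverse dual is the derivative of psi(., S, Q),
   and grad grows at least at rate e^{-Q}/2a and at most at rate max{1, grad}.
   Hence dual is 2a e^Q-Lipschitz and grows at rate at least 1/max{1, y}.

   These four facts (subgradient, dual 0 = 0, Lipschitz, growth) are all the
   proof uses: Section ConvexProfile derives from them alone two-sided bounds on
   the Bregman divergence of any radial function z |-> F |z|, by splitting
   |y - x|^2 into a radial part (|y| - |x|)^2, controlled by the 1-D divergence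
   of F, and the Cauchy-Schwarz gap |x||y| - <x, y>, weighted by the slope
   dual |x| / |x| of the gradient.  The bounds hold at every point x_t. *)

Lemma sup_eq_max {R : realType} (E : set R) (m : R) :
  E m -> (forall y, E y -> y <= m) -> sup E = m.
Proof.
move=> Em ub; apply/le_anti/andP; split; first by apply: ge_sup; [exists m|].
by apply: ub_le_sup => //; exists m.
Qed.

Lemma expR_tangent {R : realType} (x y : R) : expR x * (1 + (y - x)) <= expR y.
Proof.
have -> : expR y = expR x * expR (y - x) by rewrite -expRD addrC subrK.
by apply: ler_wpM2l; [exact: expR_ge0 | exact: expR_ge1Dx].
Qed.

(* A crude numerical bound, obtained from 1 - 1/4 <= exp (-1/4). *)
Lemma expR_quarter {R : realType} : expR (1/4 : R) <= 4/3.
Proof.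
have tangent := expR_ge1Dx (- (1/4) : R).
have inverse : expR (1/4 : R) * expR (- (1/4)) = 1 by rewrite -expRD subrr expR0.
by have := expR_gt0 (1/4 : R); nra.
Qed.

(* Euclidean geometry of R^d through the inner product dotv and the norm enorm,
   and its link with the max-norm of the normed space 'rV[R]_d in which the
   differential 'd is taken. *)
Section Euclid.
Context {R : realType} {d : nat}.
Implicit Types u v w h : 'rV[R]_d.

Lemma dotvC u v : dotv u v = dotv v u.
Proof. by apply: eq_bigr => i _; rewrite mulrC. Qed.

Lemma dotvDr u v w : dotv u (v + w) = dotv u v + dotv u w.
Proof. by rewrite /dotv -big_split; apply: eq_bigr => i _; rewrite mxE mulrDr. Qed.

Lemma dotvZr u v (k : R) : dotv u (k *: v) = k * dotv u v.
Proof. by rewrite /dotv mulr_sumr; apply: eq_bigr => i _; rewrite mxE mulrCA. Qed.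

Lemma dotvDl u v w : dotv (v + w) u = dotv v u + dotv w u.
Proof. by rewrite dotvC dotvDr !(dotvC u). Qed.

Lemma dotvZl u v (k : R) : dotv (k *: v) u = k * dotv v u.
Proof. by rewrite dotvC dotvZr dotvC. Qed.

Lemma dotvNr u v : dotv u (- v) = - dotv u v.
Proof. by rewrite -scaleN1r dotvZr mulN1r. Qed.

Lemma dotvNl u v : dotv (- v) u = - dotv v u.
Proof. by rewrite dotvC dotvNr dotvC. Qed.

Lemma dotvv_ge0 u : 0 <= dotv u u.
Proof. by apply: sumr_ge0 => i _; rewrite -expr2 sqr_ge0. Qed.

Lemma enorm_ge0 u : 0 <= enorm u.
Proof. exact: sqrtr_ge0. Qed.

Lemma enorm_sq u : enorm u ^+ 2 = dotv u u.
Proof. by rewrite /enorm sqr_sqrtr // dotvv_ge0. Qed.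

Lemma dotvv_eq0 u : dotv u u = 0 -> forall v, dotv u v = 0.
Proof.
move=> u0 v; have sq_ge0 (i : 'I_d) : true -> 0 <= u ord0 i * u ord0 i.
  by move=> _; rewrite -expr2 sqr_ge0.
rewrite /dotv big1 // => i _.
have := psumr_eq0P sq_ge0 u0 => /(_ i isT) /eqP.
by rewrite mulf_eq0 orbb => /eqP ->; rewrite mul0r.
Qed.

(* Cauchy-Schwarz, from the nonnegativity of |B u - C v|^2 with B = <v,v>, C = <u,v>. *)
Lemma cauchy_schwarz u v : dotv u v <= enorm u * enorm v.
Proof.
set A := dotv u u; set B := dotv v v; set C := dotv u v.
have A0 : 0 <= A by exact: dotvv_ge0.
have B0 : 0 <= B by exact: dotvv_ge0.
have [C0|C0] := lerP C 0; first by rewrite (le_trans C0) ?mulr_ge0 ?enorm_ge0.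
suff CAB : C ^+ 2 <= A * B.
  rewrite /enorm -/A -/B -sqrtrM // -(ger0_norm (ltW C0)) -sqrtr_sqr.
  by rewrite ler_sqrt // mulr_ge0.
have [B_eq0|B_neq0] := eqVneq B 0.
  by rewrite /C dotvC (dotvv_eq0 _ B_eq0) expr0n /= B_eq0 mulr0.
have key := dotvv_ge0 (B *: u - C *: v).
have expand : dotv (B *: u - C *: v) (B *: u - C *: v) = B * (B * A - C ^+ 2).
  rewrite -[- (C *: v)]scaleNr !(dotvDl, dotvDr, dotvZl, dotvZr).
  by rewrite -/A -/B -/C (dotvC v u) -/C; ring.
rewrite expand in key.
have B_gt0 : 0 < B by rewrite lt0r B_neq0 B0.
have : 0 <= B * A - C ^+ 2 by rewrite -(pmulr_rge0 _ B_gt0).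
nra.
Qed.

Lemma coord_le_norm h (i : 'I_d) : `|h ord0 i| <= `|h|.
Proof.
have /mapP[j _ ->] : `|h ord0 i| \in [seq `|h x.1 x.2| | x : 'I_1 * 'I_d].
  by apply/mapP; exists (ord0, i) => //=; rewrite mem_enum.
by rewrite [leRHS]/Num.norm /= mx_normrE; apply/bigmax_geP; right; exists j.
Qed.

Lemma dotvv_le_norm h : dotv h h <= d%:R * `|h| ^+ 2.
Proof.
rewrite /dotv mulr_natl -[in X in _ *+ X](card_ord d) -sumr_const.
apply: ler_sum => i _; rewrite -expr2 -real_normK ?num_real //.
by rewrite lerXn2r ?nnegrE ?normr_ge0 // coord_le_norm.
Qed.

Lemma dotv_le_norm v h : `|dotv v h| <= (\sum_(i < d) `|v ord0 i|) * `|h|.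
Proof.
rewrite /dotv mulr_suml; apply: le_trans (ler_norm_sum _ _ _) _.
apply: ler_sum => i _; rewrite normrM ler_wpM2l //; exact: coord_le_norm.
Qed.

End Euclid.

Section RadialForm.
Context {R : realType} {d : nat}.
Variables (k : R) (v : 'rV[R]_d).

Definition radial_form : 'rV[R]_d -> R^o := fun h => k * dotv v h.

Lemma radial_form_linear : linear_for *:%R radial_form.
Proof.
move=> c x y; rewrite /radial_form dotvDr dotvZr /=.
by rewrite /GRing.scale /= mulrDr mulrCA.
Qed.

HB.instance Definition _ :=
  GRing.isLinear.Build R 'rV[R]_d R^o *:%R radial_form radial_form_linear.

Lemma radial_form_continuous : continuous radial_form.
Proof.
apply: bounded_linear_continuous; apply/linear_boundedP.
exists (`|k| * \sum_(i < d) `|v ord0 i|); split; first exact: num_real.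
move=> r r_gt x; rewrite /radial_form normrM.
apply: le_trans (_ : `|k| * ((\sum_(i < d) `|v ord0 i|) * `|x|) <= _).
  by rewrite ler_wpM2l // dotv_le_norm.
by rewrite mulrA ler_wpM2r // ltW.
Qed.

End RadialForm.

Lemma diff_quadratic_error {R : realType} {d : nat} (f : 'rV[R]_d -> R^o)
    (x : 'rV[R]_d) (df : {linear 'rV[R]_d -> R^o}) (C : R) :
  0 <= C -> continuous df ->
  (forall h, `|f (h + x) - f x - df h| <= C * dotv h h) ->
  'd f x = df :> ('rV[R]_d -> R^o).
Proof.
move=> C0 df_cont err; apply: diff_unique => //.
apply/eqaddoP => eps eps0 /=.
suff : \forall h \near (0 : 'rV[R]_d), `|f (h + x) - f x - df h| <= eps * `|h|.
  by apply: filterS => h; rewrite !fctE /= opprD addrA.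
have Cd0 : 0 <= C * d%:R by apply: mulr_ge0.
apply/nbhs_norm0P; exists (eps / (C * d%:R + 1)).
  by apply: divr_gt0 => //; apply: ltr_pwDr.
move=> h /= h_small; apply: le_trans (err h) _.
have n0 : 0 <= `|h| by exact: normr_ge0.
have h_eps : `|h| * (C * d%:R + 1) <= eps.
  by rewrite -ler_pdivlMr; [exact: ltW | apply: ltr_pwDr].
apply: le_trans (_ : C * (d%:R * `|h| ^+ 2) <= _).
  by rewrite ler_wpM2l // dotvv_le_norm.
apply: le_trans (_ : `|h| * (C * d%:R + 1) * `|h| <= _); last exact: ler_wpM2r.
by rewrite expr2; have := mulr_ge0 n0 n0; nra.
Qed.

Lemma min1inv_max {R : realType} (M : R) : 0 <= M -> min1inv M * Num.max 1 M = 1.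
Proof.
move=> M0; rewrite /min1inv; have [->|M_neq0] := eqVneq M 0; first by rewrite max_l ?mul1r.
have M_gt0 : 0 < M by rewrite lt0r M_neq0 M0.
have [M1|M1] := lerP M 1.
  by rewrite mulr1 min_l // -[1]invr1 lef_pV2 ?posrE.
by rewrite min_r ?mulVf // -[1]invr1 lef_pV2 ?posrE // ltW.
Qed.

Lemma min1inv_ge0 {R : realType} (M : R) : 0 <= M -> 0 <= min1inv M.
Proof.
move=> M0; have := min1inv_max _ M0; have : 1 <= Num.max 1 M by rewrite le_max lexx.
by move=> ? ?; nra.
Qed.

Section ConvexProfile.
Context {R : realType}.
Variables (F theta : R -> R) (K : R).
Hypothesis F_subgrad : forall x y, 0 <= x -> 0 <= y -> F x + theta x * (y - x) <= F y.
Hypothesis theta0 : theta 0 = 0.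
Hypothesis theta_lip : forall x y, 0 <= x -> x <= y -> theta y - theta x <= K * (y - x).
Hypothesis theta_growth :
  forall x y, 0 <= x -> x <= y -> y - x <= Num.max 1 y * (theta y - theta x).

Lemma theta_mono x y : 0 <= x -> x <= y -> theta x <= theta y.
Proof.
move=> x0 xy; have := theta_growth _ _ x0 xy; have : 1 <= Num.max 1 y by rewrite le_max lexx.
by move=> ? ?; rewrite -subr_ge0; nra.
Qed.

Lemma theta_ge0 x : 0 <= x -> 0 <= theta x.
Proof. by move=> x0; rewrite -theta0 theta_mono. Qed.

Lemma theta_mono_sq x y : 0 <= x -> 0 <= y -> 0 <= (theta y - theta x) * (y - x).
Proof.
wlog xy : x y / x <= y => [sym x0 y0|x0 _].
  have /orP[xy|yx] := le_total x y; first exact: sym.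
  have -> : (theta y - theta x) * (y - x) = (theta x - theta y) * (x - y) by ring.
  exact: sym.
by rewrite mulr_ge0 // subr_ge0 // theta_mono.
Qed.

Lemma theta_lip_sq x y : 0 <= x -> 0 <= y ->
  (theta y - theta x) * (y - x) <= K * (y - x) ^+ 2.
Proof.
wlog xy : x y / x <= y => [sym x0 y0|x0 _].
  have /orP[xy|yx] := le_total x y; first exact: sym.
  have -> : (theta y - theta x) * (y - x) = (theta x - theta y) * (x - y) by ring.
  by rewrite -sqrrN opprB; exact: sym.
have := theta_lip _ _ x0 xy; have := theta_mono _ _ x0 xy; have : 0 <= y - x by lra.
by nra.
Qed.

Lemma theta_growth_sq x y : 0 <= x -> 0 <= y ->
  (y - x) ^+ 2 <= Num.max 1 (Num.max x y) * ((theta y - theta x) * (y - x)).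
Proof.
wlog xy : x y / x <= y => [sym x0 y0|x0 _].
  have /orP[xy|yx] := le_total x y; first exact: sym.
  have -> : (theta y - theta x) * (y - x) = (theta x - theta y) * (x - y) by ring.
  by rewrite (maxC x) -sqrrN opprB; exact: sym.
rewrite (max_r xy); have := theta_growth _ _ x0 xy; have : 0 <= y - x by lra.
by nra.
Qed.

Definition breg1 (r s : R) : R := F s - F r - theta r * (s - r).

Lemma breg1_ge0 r s : 0 <= r -> 0 <= s -> 0 <= breg1 r s.
Proof. by move=> r0 s0; have := F_subgrad _ _ r0 s0; rewrite /breg1; lra. Qed.

Lemma breg1_le r s : 0 <= r -> 0 <= s -> breg1 r s <= K * (s - r) ^+ 2.
Proof.
move=> r0 s0; have := F_subgrad _ _ s0 r0; have := theta_lip_sq _ _ r0 s0.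
by rewrite /breg1; nra.
Qed.

(* Lower bound through the midpoint w: breg1 r s >= (theta w - theta r)(w - r). *)
Lemma breg1_ge r s : 0 <= r -> 0 <= s ->
  (s - r) ^+ 2 <= 4 * Num.max 1 (Num.max r s) * breg1 r s.
Proof.
move=> r0 s0; set w := (r + s) / 2.
have w0 : 0 <= w by rewrite /w; lra.
have mid : (theta w - theta r) * (w - r) <= breg1 r s.
  have := F_subgrad _ _ w0 s0; have := F_subgrad _ _ r0 w0; rewrite /breg1 /w; nra.
have M_le : Num.max 1 (Num.max r w) <= Num.max 1 (Num.max r s).
  have wM : w <= Num.max r s.
    by rewrite le_max /w; have [rs|sr] := lerP r s; apply/orP; [right|left]; lra.
  by apply: le_max2; [exact: lexx | rewrite ge_max wM le_max lexx].
have -> : (s - r) ^+ 2 = 4 * (w - r) ^+ 2 by rewrite /w; field.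
have := theta_growth_sq _ _ r0 w0; have := theta_mono_sq _ _ r0 w0.
have : 1 <= Num.max 1 (Num.max r w) by rewrite le_max lexx.
by nra.
Qed.

(* The radial function z |-> F |z| on R^d, and its slope k = theta |x| / |x|
   at x, the coefficient of its gradient k x. *)
Context {d : nat}.
Implicit Types x y : 'rV[R]_d.

Definition radial (z : 'rV[R]_d) : R^o := F (enorm z).

Definition slope x : R := theta (enorm x) / enorm x.

Lemma slopeE x : theta (enorm x) = slope x * enorm x.
Proof.
rewrite /slope; have [->|r_neq0] := eqVneq (enorm x) 0; first by rewrite theta0 mulr0.
by rewrite divfK.
Qed.

Lemma slope_ge0 x : 0 <= slope x.
Proof. by rewrite /slope divr_ge0 ?theta_ge0 ?enorm_ge0. Qed.

Lemma slope_le x : slope x <= K.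
Proof.
rewrite /slope; have [->|r_neq0] := eqVneq (enorm x) 0.
  rewrite invr0 mulr0; have := theta_lip _ _ (lexx 0) ler01.
  by have := theta_mono _ _ (lexx 0) ler01; lra.
have r_gt0 : 0 < enorm x by rewrite lt0r r_neq0 enorm_ge0.
have := theta_lip _ _ (lexx 0) (enorm_ge0 x); rewrite theta0 !subr0.
by rewrite ler_pdivrMr.
Qed.

(* For |x| > 0 the slope is at least 1/max{1,|x|} >= min{1,1/M}, M >= |x|. *)
Lemma slope_ge_min1inv x (M : R) : 0 < enorm x -> enorm x <= M -> min1inv M <= slope x.
Proof.
move=> r_gt0 rM; have M0 : 0 <= M by apply: le_trans rM; exact: ltW.
have rate : 1 <= Num.max 1 (enorm x) * slope x.
  have := theta_growth _ _ (lexx 0) (enorm_ge0 x).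
  by rewrite theta0 !subr0 slopeE mulrA -(ler_pM2r r_gt0) mul1r.
have rateM : 1 <= Num.max 1 M * slope x.
  apply: le_trans rate _; rewrite ler_wpM2r ?slope_ge0 //.
  by rewrite ge_max !le_max lexx rM /= orbT.
have := ler_wpM2l (min1inv_ge0 _ M0) rateM.
by rewrite mulr1 mulrA min1inv_max // mul1r.
Qed.

Definition cs_gap x y : R := enorm x * enorm y - dotv x y.

Lemma cs_gap_ge0 x y : 0 <= cs_gap x y.
Proof. by rewrite /cs_gap subr_ge0 cauchy_schwarz. Qed.

Lemma cs_gap_eq0 x y : enorm x = 0 -> cs_gap x y = 0.
Proof.
move=> x0; have xx0 : dotv x x = 0 by rewrite -enorm_sq x0 expr0n.
by rewrite /cs_gap x0 mul0r (dotvv_eq0 _ xx0) subrr.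
Qed.

Lemma dotv_sub_split x y :
  dotv (y - x) (y - x) = (enorm y - enorm x) ^+ 2 + 2 * cs_gap x y.
Proof.
rewrite /cs_gap dotvDl !dotvDr !(dotvNl, dotvNr) (dotvC y x) -!enorm_sq.
by ring.
Qed.

Lemma radial_remainder x y :
  radial y - radial x - slope x * dotv x (y - x)
  = breg1 (enorm x) (enorm y) + slope x * cs_gap x y.
Proof.
by rewrite /radial /breg1 /cs_gap slopeE dotvDr dotvNr -enorm_sq; ring.
Qed.

Lemma radial_remainder_bounds x y :
  0 <= radial y - radial x - slope x * dotv x (y - x) <= K * dotv (y - x) (y - x).
Proof.
rewrite radial_remainder dotv_sub_split.
have := breg1_ge0 _ _ (enorm_ge0 x) (enorm_ge0 y).
have := breg1_le _ _ (enorm_ge0 x) (enorm_ge0 y).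
have := slope_ge0 x; have := slope_le x; have := cs_gap_ge0 x y.
by move=> ? ? ? ? ?; apply/andP; split; nra.
Qed.

Lemma radial_diff x : 'd radial x = radial_form (slope x) x :> ('rV[R]_d -> R^o).
Proof.
have K0 : 0 <= K by apply: le_trans (slope_le x); exact: slope_ge0.
apply: (@diff_quadratic_error _ _ _ _ _ _ K0); first exact: radial_form_continuous.
move=> h; have /andP[rem0 rem_le] := radial_remainder_bounds x (h + x).
by rewrite !addrK in rem0 rem_le; rewrite ger0_norm.
Qed.

Lemma bregman_radial x y :
  dotv (y - x) (y - x) * min1inv (Num.max (enorm y) (enorm x)) / 4
    <= bregman radial y x <= K * dotv (y - x) (y - x).
Proof.
rewrite /bregman radial_diff /radial_form /=.
have /andP[_ ->] := radial_remainder_bounds x y; rewrite andbT radial_remainder.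
set M := Num.max (enorm y) (enorm x); set m := min1inv M.
have M0 : 0 <= M by rewrite le_max enorm_ge0.
have m_gap : m * cs_gap x y <= slope x * cs_gap x y.
  have [r0|r_neq0] := eqVneq (enorm x) 0; first by rewrite cs_gap_eq0 // !mulr0.
  rewrite ler_wpM2r ?cs_gap_ge0 // slope_ge_min1inv ?lt0r ?r_neq0 ?enorm_ge0 //.
  by rewrite le_max lexx orbT.
have m_rad : m * (enorm y - enorm x) ^+ 2 <= 4 * breg1 (enorm x) (enorm y).
  have := ler_wpM2l (min1inv_ge0 _ M0) (breg1_ge _ _ (enorm_ge0 x) (enorm_ge0 y)).
  rewrite (maxC (enorm x)) -/M -/m.
  have -> : m * (4 * Num.max 1 M * breg1 (enorm x) (enorm y))
          = 4 * breg1 (enorm x) (enorm y) * (m * Num.max 1 M) by ring.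
  by rewrite min1inv_max // mulr1.
rewrite dotv_sub_split; have := cs_gap_ge0 x y; have := slope_ge0 x; nra.
Qed.

End ConvexProfile.

(* The potential psi(., S, Q) for S^2 = a >= 4 and Q >= 0.  The inner supremum
   of psistar is a Huber function of |theta|, so psistar theta = c exp(huber |theta|)
   with c = exp(-Q).  On [0, +oo) this is convex with derivative
   grad = c exp(huber) huber', an increasing bijection of [0, +oo); its inverse
   dual is the derivative of psi, and the two-sided Lipschitz bounds on grad
   turn into the hypotheses of ConvexProfile for (psi, dual). *)
Section HuberConjugate.
Context {R : realType}.
Variables (a Q : R).
Hypotheses (a_ge4 : 4 <= a) (Q_ge0 : 0 <= Q).

Definition huber (u : R) : R := if u <= a then u ^+ 2 / (4 * a) else u / 2 - a / 4.
Definition huber' (u : R) : R := if u <= a then u / (2 * a) else 1 / 2.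
Definition c : R := expR (- Q).
Definition grad (u : R) : R := c * expR (huber u) * huber' u.

Let a_gt0 : 0 < a. Proof. by apply: lt_le_trans a_ge4. Qed.

Lemma c_gt0 : 0 < c. Proof. exact: expR_gt0. Qed.

Lemma huber_ge0 u : 0 <= u -> 0 <= huber u.
Proof.
have a4 := a_ge4.
rewrite /huber => u0; case: ifPn => ua; first by rewrite divr_ge0 ?sqr_ge0 //; lra.
by rewrite -ltNge in ua; lra.
Qed.

Lemma huber'_ge0 u : 0 <= u -> 0 <= huber' u.
Proof.
have a4 := a_ge4.
by rewrite /huber' => u0; case: ifP => _; [rewrite divr_ge0 //; lra | lra].
Qed.

(* For b in [-1/2, 1/2], theta b - b^2 a is maximized at b = theta / 2a clipped. *)
Lemma objective_le th b : -(1/2) <= b <= 1/2 -> th * b - b ^+ 2 * a <= huber `|th|.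
Proof.
have a4 := a_ge4.
move=> /andP[b1 b2]; rewrite /huber; case: ifPn => tha.
  rewrite real_normK ?num_real // ler_pdivlMr; last lra.
  by have := sqr_ge0 (2 * a * b - th); nra.
rewrite -ltNge in tha; have [th0|th0] := lerP 0 th.
  rewrite ger0_norm // in tha *.
  by have := mulr_ge0 (_ : 0 <= 1/2 - b) (_ : 0 <= th - a * (b + 1/2)); nra.
rewrite ltr0_norm // in tha *.
by have := mulr_ge0 (_ : 0 <= b + 1/2) (_ : 0 <= - th - a * (1/2 - b)); nra.
Qed.

Lemma objective_max th : exists2 b, -(1/2) <= b <= 1/2 & th * b - b ^+ 2 * a = huber `|th|.
Proof.
have a4 := a_ge4.
rewrite /huber; case: ifPn => tha.
  exists (th / (2 * a)); last by rewrite real_normK ?num_real //; field; lra.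
  move: tha; rewrite ler_norml => /andP[t1 t2].
  by rewrite ler_pdivlMr ?ler_pdivrMr; lra.
rewrite -ltNge in tha; have [th0|th0] := lerP 0 th.
  by rewrite ger0_norm // in tha *; exists (1/2); [lra | field; lra].
by rewrite ltr0_norm // in tha *; exists (-(1/2)); [lra | field; lra].
Qed.

Lemma psistarE th : psistar th (Num.sqrt a) Q = c * expR (huber `|th|).
Proof.
have a4 := a_ge4.
rewrite /psistar /c sqr_sqrtr; last lra.
rewrite -expRD addrC; congr (expR (_ + _)); apply: sup_eq_max.
  by have [b b_in <-] := objective_max th; exists b.
by move=> _ [b b_in <-]; exact: objective_le.
Qed.

Lemma huber_tangent u v : 0 <= u -> 0 <= v -> huber u + huber' u * (v - u) <= huber v.
Proof.
have a4 := a_ge4.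
move=> u0 v0; rewrite /huber /huber'.
case: ifPn => ua; case: ifPn => va; rewrite ?ltNge -?ltNge in ua va.
- rewrite -subr_ge0.
  have -> : v ^+ 2 / (4 * a) - (u ^+ 2 / (4 * a) + u / (2 * a) * (v - u))
          = (v - u) ^+ 2 / (4 * a) by field; lra.
  by rewrite divr_ge0 ?sqr_ge0 //; lra.
- have -> : u ^+ 2 / (4 * a) + u / (2 * a) * (v - u) = (2 * u * v - u ^+ 2) / (4 * a).
    by field; lra.
  rewrite ler_pdivrMr; last lra.
  by have := mulr_ge0 (_ : 0 <= a - u) (_ : 0 <= v - a); nra.
- have -> : v ^+ 2 / (4 * a) = (v / 2 - a / 4) + (v - a) ^+ 2 / (4 * a) by field; lra.
  have : 0 <= (v - a) ^+ 2 / (4 * a) by rewrite divr_ge0 ?sqr_ge0 //; lra.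
  lra.
- lra.
Qed.

Lemma huber'_mono u v : 0 <= u -> u <= v -> huber' u <= huber' v.
Proof.
have a4 := a_ge4.
move=> u0 uv; rewrite /huber'.
case: ifPn => ua; case: ifPn => va; rewrite ?ltNge -?ltNge in ua va.
- by rewrite ler_pM2r // invr_gt0; lra.
- by rewrite ler_pdivrMr; lra.
- lra.
- lra.
Qed.

Lemma huber'_lip u v : 0 <= u -> u <= v -> huber' v - huber' u <= (v - u) / (2 * a).
Proof.
have a4 := a_ge4.
move=> u0 uv; rewrite /huber'.
case: ifPn => va; case: ifPn => ua; rewrite ?ltNge -?ltNge in ua va.
- by rewrite mulrBl.
- lra.
- have -> : 1 / 2 - u / (2 * a) = (a - u) / (2 * a) by field; lra.
  by rewrite ler_pM2r ?invr_gt0; lra.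
- by rewrite subrr divr_ge0 //; lra.
Qed.

Lemma grad_ge0 u : 0 <= u -> 0 <= grad u.
Proof.
by move=> u0; rewrite /grad !mulr_ge0 ?expR_ge0 ?huber'_ge0 // ltW // c_gt0.
Qed.

Lemma grad0 : grad 0 = 0.
Proof. by rewrite /grad /huber' ifT ?mul0r ?mulr0 //; have := a_ge4; lra. Qed.

(* Over [u, v] the gain of huber' plus the gain of huber weighted by huber' v
   dominates (v - u) / 2a; this makes grad grow at least linearly. *)
Lemma huber_gain u v : 0 <= u -> u <= v ->
  (v - u) / (2 * a) <= huber' v - huber' u + (huber v - huber u) * huber' v.
Proof.
have a4 := a_ge4; move=> u0 uv.
rewrite /huber' /huber; case: ifPn => va; case: ifPn => ua.
all: rewrite ?ltNge -?ltNge in ua va.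
- have : 0 <= (v ^+ 2 / (4 * a) - u ^+ 2 / (4 * a)) * (v / (2 * a)).
    apply: mulr_ge0; last by apply: divr_ge0; lra.
    by rewrite -mulrBl; apply: mulr_ge0; [nra | rewrite invr_ge0; lra].
  by rewrite mulrBl; lra.
- lra.
- have e1 : (v - a) / 2 <= v / 2 - a / 4 - u ^+ 2 / (4 * a).
    have : u ^+ 2 / (4 * a) <= a / 4 by rewrite ler_pdivrMr; nra.
    lra.
  have e2 : (v - a) / (2 * a) <= (v - a) / 4 by rewrite ler_pdivrMr; nra.
  have -> : 1 / 2 - u / (2 * a) = (a - u) / (2 * a) by field; lra.
  have -> : (v - u) / (2 * a) = (a - u) / (2 * a) + (v - a) / (2 * a) by field; lra.
  lra.
- have : (v - u) / (2 * a) <= (v - u) / 4 by rewrite ler_pdivrMr; nra.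
  lra.
Qed.

Lemma grad_lower_lip u v : 0 <= u -> u <= v -> c / (2 * a) * (v - u) <= grad v - grad u.
Proof.
have a4 := a_ge4; move=> u0 uv; have v0 : 0 <= v by lra.
have c0 := c_gt0; have gain := huber_gain _ _ u0 uv.
have Et := expR_tangent (huber u) (huber v).
have Eu1 : 1 <= expR (huber u).
  by have := expR_ge1Dx (huber u); have := huber_ge0 _ u0; lra.
have h'v := huber'_ge0 _ v0; have h'u := huber'_ge0 _ u0.
rewrite /grad; set Eu := expR (huber u) in Et Eu1 *; set Ev := expR (huber v) in Et *.
set X := huber' v - huber' u + (huber v - huber u) * huber' v in gain.
have s1 : c * (Eu * X) <= c * Ev * huber' v - c * Eu * huber' u.
  by rewrite /X; have := ler_wpM2r h'v Et; have := ltW c0; nra.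
have s2 : c * ((v - u) / (2 * a)) <= c * (Eu * X).
  apply: ler_wpM2l; first lra.
  have : 0 <= (v - u) / (2 * a) by apply: divr_ge0; lra.
  by nra.
have -> : c / (2 * a) * (v - u) = c * ((v - u) / (2 * a)) by field; lra.
lra.
Qed.

(* The second-order factor of grad: c e^huber (huber'' + huber'^2) <= max(1, grad),
   with 1/(2a) bounding huber''.  Below 2 it is small since c <= 1 and
   huber v <= 1/4; above 2 it is dominated by grad v itself. *)
Lemma grad_curvature v : 0 <= v ->
  c * expR (huber v) * (1 / (2 * a) + huber' v ^+ 2) <= Num.max 1 (grad v).
Proof.
have a4 := a_ge4; have c0 := c_gt0; move=> v0.
have c1 : c <= 1 by rewrite /c expR_le1; have := Q_ge0; lra.
have cE0 z : 0 <= c * expR z by rewrite mulr_ge0 ?expR_ge0 // ltW.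
rewrite /grad le_max; apply/orP; rewrite /huber' /huber.
case: ifPn => va; rewrite ?ltNge -?ltNge in va; last first.
  right; rewrite ler_wpM2l ?cE0 // expr2.
  have : 1 / (2 * a) <= 1 / 4 by rewrite ler_pdivrMr; lra.
  lra.
have [v2|v2] := lerP 2 v.
  right; rewrite ler_wpM2l ?cE0 // -subr_ge0.
  have -> : v / (2 * a) - (1 / (2 * a) + (v / (2 * a)) ^+ 2)
          = (2 * a * v - v ^+ 2 - 2 * a) / (4 * a ^+ 2) by field; lra.
  by rewrite divr_ge0 ?mulr_ge0 ?sqr_ge0 //; nra.
left; have E43 : expR (v ^+ 2 / (4 * a)) <= 4 / 3.
  apply: le_trans (@expR_quarter R); rewrite ler_expR ler_pdivrMr; nra.
have cE43 : c * expR (v ^+ 2 / (4 * a)) <= 4 / 3.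
  by have := expR_ge0 (v ^+ 2 / (4 * a)); nra.
have small : 1 / (2 * a) + (v / (2 * a)) ^+ 2 <= 3 / 16.
  have : 1 / (2 * a) <= 1 / 8 by rewrite ler_pdivrMr; lra.
  have : 0 <= v / (2 * a) <= 1 / 4 by rewrite divr_ge0 ?ler_pdivrMr //=; lra.
  by nra.
have := cE0 (v ^+ 2 / (4 * a)); have : 0 <= 1 / (2 * a) + (v / (2 * a)) ^+ 2.
  by rewrite addr_ge0 ?sqr_ge0 ?divr_ge0 //; lra.
by nra.
Qed.

Lemma grad_upper_lip u v : 0 <= u -> u <= v ->
  grad v - grad u <= Num.max 1 (grad v) * (v - u).
Proof.
have a4 := a_ge4; move=> u0 uv; have v0 : 0 <= v by lra.
have c0 := c_gt0; have curv := grad_curvature _ v0.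
have Et := expR_tangent (huber v) (huber u).
have h'v := huber'_ge0 _ v0; have h'u := huber'_ge0 _ u0.
have hL := huber'_lip _ _ u0 uv; have hT := huber_tangent _ _ v0 u0.
have hM := huber'_mono _ _ u0 uv.
have cE0 : 0 <= c * expR (huber v) by rewrite mulr_ge0 ?expR_ge0 // ltW.
rewrite /grad in curv *.
set Eu := expR (huber u) in Et *; set Ev := expR (huber v) in Et cE0 curv *.
have s1 : c * Ev * huber' v - c * Eu * huber' u
          <= c * Ev * (huber' v - huber' u + (huber v - huber u) * huber' u).
  by have := ler_wpM2r h'u Et; have := ltW c0; nra.
have s2 : huber' v - huber' u + (huber v - huber u) * huber' u
          <= (v - u) * (1 / (2 * a) + huber' v ^+ 2).
  have t1 : (huber v - huber u) * huber' u <= huber' v * (v - u) * huber' u.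
    by apply: ler_wpM2r => //; lra.
  have t2 : huber' v * (v - u) * huber' u <= huber' v * (v - u) * huber' v.
    by apply: ler_wpM2l => //; apply: mulr_ge0 => //; lra.
  have -> : (v - u) * (1 / (2 * a) + huber' v ^+ 2)
          = (v - u) / (2 * a) + huber' v * (v - u) * huber' v by field; lra.
  lra.
have vu0 : 0 <= v - u by lra.
by have := ler_wpM2l cE0 s2; have := ler_wpM2r vu0 curv; nra.
Qed.

Lemma grad_at_a : grad a = c * expR (a / 4) / 2.
Proof.
have a4 := a_ge4; rewrite /grad /huber /huber' lexx.
have -> : a ^+ 2 / (4 * a) = a / 4 by field; lra.
have -> : a / (2 * a) = 1 / 2 by field; lra.
by rewrite mul1r.
Qed.

Lemma grad_onto_low x : 0 <= x -> x <= grad a -> exists2 th, 0 <= th & grad th = x.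
Proof.
have a4 := a_ge4; move=> x0 x_le.
pose f u := c * expR (u ^+ 2 / (4 * a)) * (u / (2 * a)).
have f_cont : continuous f.
  move=> u; apply: cvgM; last exact: cvgM cvg_id (cvg_cst _).
  apply: cvgM; first exact: cvg_cst.
  apply: continuous_comp; last exact: continuous_expR.
  by apply: cvgM (cvg_cst _); apply: cvgM; exact: cvg_id.
have f0 : f 0 = 0 by rewrite /f mul0r mulr0.
have fa : f a = grad a by rewrite /f /grad /huber /huber' lexx.
have fa0 : 0 <= f a by rewrite fa grad_ge0 //; lra.
have x_in : Num.min (f 0) (f a) <= x <= Num.max (f 0) (f a).
  by rewrite f0 (min_l fa0) (max_r fa0) x0 fa.
have [th th_in fth] := @IVT R f 0 a x (ltW a_gt0) (continuous_subspaceT f_cont) x_in.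
move: th_in; rewrite in_itv /= => /andP[th0 tha].
by exists th => //; rewrite /grad /huber /huber' tha.
Qed.

(* ... and (a, +oo) onto (grad a, +oo), where grad th = c e^{th/2 - a/4} / 2. *)
Lemma grad_onto_high x : grad a < x -> exists2 th, 0 <= th & grad th = x.
Proof.
have a4 := a_ge4; have c0 := c_gt0; rewrite grad_at_a => x_gt.
have [y ey] : exists y, expR y = 2 * x / c.
  apply: expR_total; rewrite divr_gt0 //.
  by have := mulr_gt0 c0 (expR_gt0 (a / 4)); lra.
have ya : a / 4 < y.
  by rewrite -ltr_expR ey ltr_pdivlMr //; lra.
exists (2 * y + a / 2); first lra.
rewrite /grad /huber /huber'.
have -> : (2 * y + a / 2 <= a) = false by apply/negbTE; rewrite -ltNge; lra.
have -> : (2 * y + a / 2) / 2 - a / 4 = y by field.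
by rewrite ey; field; rewrite gt_eqF.
Qed.

Lemma grad_onto x : 0 <= x -> exists2 th, 0 <= th & grad th = x.
Proof.
move=> x0; have [x_le|x_gt] := lerP x (grad a).
  exact: grad_onto_low.
exact: grad_onto_high.
Qed.

(* psistar lies above its tangent line at any u >= 0, of slope grad u >= 0; for
   negative theta this follows from the case of |theta| >= theta. *)
Lemma psistar_tangent th u : 0 <= u ->
  c * expR (huber u) + grad u * (th - u) <= psistar th (Num.sqrt a) Q.
Proof.
move=> u0; rewrite psistarE /grad.
have Et := expR_tangent (huber u) (huber `|th|).
have hT := huber_tangent _ _ u0 (normr_ge0 th).
have cE0 : 0 <= c * expR (huber u) by rewrite mulr_ge0 ?expR_ge0 // ltW // c_gt0.
have h'u := huber'_ge0 _ u0; have th_le := ler_norm th.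
have : c * expR (huber u) * (1 + huber' u * (`|th| - u)) <= c * expR (huber `|th|).
  rewrite -mulrA ler_wpM2l ?(ltW c_gt0) //; apply: le_trans Et.
  by rewrite ler_wpM2l ?expR_ge0 //; lra.
by have := mulr_ge0 cE0 h'u; nra.
Qed.

Lemma psi_at x th : 0 <= th -> grad th = x ->
  psi x (Num.sqrt a) Q = th * x - c * expR (huber th).
Proof.
move=> th0 <-; apply: sup_eq_max; first by exists th => //; rewrite psistarE ger0_norm.
by move=> _ [th' _ <-]; have := psistar_tangent th' _ th0; lra.
Qed.

(* The inverse of grad on [0, +oo): the derivative of psi(., sqrt a, Q). *)
Definition dual (x : R) : R := xget 0 (fun th => 0 <= th /\ grad th = x).

Lemma dualP x : 0 <= x -> 0 <= dual x /\ grad (dual x) = x.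
Proof.
move=> x0; apply: (@xgetPex _ 0 (fun th : R => 0 <= th /\ grad th = x)).
by have [th th0 gth] := grad_onto _ x0; exists th.
Qed.

Lemma psi_dual x : 0 <= x -> psi x (Num.sqrt a) Q = dual x * x - c * expR (huber (dual x)).
Proof. by move=> x0; have [th0 gth] := dualP _ x0; exact: psi_at. Qed.

Lemma psi_subgrad x y : 0 <= x -> 0 <= y ->
  psi x (Num.sqrt a) Q + dual x * (y - x) <= psi y (Num.sqrt a) Q.
Proof.
move=> x0 y0; rewrite !psi_dual //.
have [dx0 gx] := dualP _ x0; have [dy0 gy] := dualP _ y0.
have := psistar_tangent (dual x) _ dy0; rewrite psistarE ger0_norm // gy.
have := psistar_tangent (dual y) _ dx0; rewrite psistarE ger0_norm // gx.
by nra.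
Qed.

(* The Lipschitz constants of grad invert into those of dual. *)
Lemma dual_mono x y : 0 <= x -> x <= y -> dual x <= dual y.
Proof.
have a4 := a_ge4; move=> x0 xy; have y0 : 0 <= y by lra.
have [dx0 gx] := dualP _ x0; have [dy0 gy] := dualP _ y0.
rewrite leNgt; apply/negP => lt.
have := grad_lower_lip _ _ dy0 (ltW lt); rewrite gx gy.
have : 0 < c / (2 * a) * (dual x - dual y) by rewrite mulr_gt0 ?divr_gt0 ?c_gt0 //; lra.
lra.
Qed.

Lemma dual_lip x y : 0 <= x -> x <= y -> dual y - dual x <= 2 * a / c * (y - x).
Proof.
have a4 := a_ge4; have c0 := c_gt0; move=> x0 xy; have y0 : 0 <= y by lra.
have [dx0 gx] := dualP _ x0; have [dy0 gy] := dualP _ y0.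
have := grad_lower_lip _ _ dx0 (dual_mono _ _ x0 xy); rewrite gx gy.
have -> : c / (2 * a) * (dual y - dual x) = (dual y - dual x) / (2 * a / c).
  by field; rewrite !gt_eqF //; lra.
by rewrite ler_pdivrMr ?divr_gt0 // mulrC; lra.
Qed.

Lemma dual_growth x y : 0 <= x -> x <= y -> y - x <= Num.max 1 y * (dual y - dual x).
Proof.
move=> x0 xy; have [dx0 gx] := dualP _ x0; have [dy0 gy] := dualP _ (le_trans x0 xy).
by have := grad_upper_lip _ _ dx0 (dual_mono _ _ x0 xy); rewrite gx gy.
Qed.

Lemma dual0 : dual 0 = 0.
Proof.
have a4 := a_ge4; have [d0 g0] := dualP _ (lexx 0).
apply/le_anti; rewrite d0 andbT.
have := grad_lower_lip _ _ (lexx 0) d0; rewrite g0 grad0 subrr subr0.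
have : 0 < c / (2 * a) by rewrite divr_gt0 ?c_gt0 //; lra.
by nra.
Qed.

End HuberConjugate.

Lemma Ssq_ge4 {R : realType} {d : nat} (g : nat -> 'rV[R]_d) (eta : nat -> R) (t : nat) :
  4 <= Ssq g eta t.
Proof. by elim: t => [|t IH] //=; have := sqr_ge0 (enorm (eta t.+1 *: g t.+1)); lra. Qed.

Lemma Qv_ge0 {R : realType} {d : nat} (g : nat -> 'rV[R]_d) (eta : nat -> R) (t : nat) :
  0 <= Qv g eta t.
Proof.
elim: t => [|t IH] //=; rewrite addr_ge0 ?divr_ge0 ?sqr_ge0 //.
exact: le_trans (Ssq_ge4 g eta t.+1).
Qed.

(* Lemma 19, with xtil = max{|x*|, |x_t|}: the radial bounds of bregman_radial
   for the profile (psi(., S_{t-1}, Q_{t-1}), dual), using S_{t-1} >= 2. *)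
Theorem lemma19 (R : realType) (d : nat) (g : nat -> 'rV[R]_d) (eta : nat -> R)
  (eta_ge0 : forall s, 0 <= eta s) (t : nat) (ht : (1 <= t)%N) (xt : 'rV[R]_d)
  (xt_min : forall y : 'rV[R]_d,
     phi g eta t xt - dotv (thetav g eta t.-1) xt <= phi g eta t y - dotv (thetav g eta t.-1) y)
  (xstar : 'rV[R]_d) :
  exists xtil : R,
    Num.min (enorm xstar) (enorm xt) <= xtil <= Num.max (enorm xstar) (enorm xt) /\
    enorm (xstar - xt) ^+ 2 / (Sv g eta t.-1 + 2) * min1inv xtil
      <= bregman (phi g eta t) xstar xt /\
    bregman (phi g eta t) xstar xt
      <= 2 * enorm (xstar - xt) ^+ 2 * (Sv g eta t.-1 ^+ 2 + Qv g eta t.-1)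
           * expR (Qv g eta t.-1).
Proof.
set a := Ssq g eta t.-1; set Q := Qv g eta t.-1.
have a4 : 4 <= a := Ssq_ge4 g eta t.-1; have Q0 : 0 <= Q := Qv_ge0 g eta t.-1.
pose F u := psi u (Num.sqrt a) Q.
have /andP[lower upper] := bregman_radial F _ _ (psi_subgrad a Q a4) (dual0 a Q a4)
  (dual_lip a Q a4) (dual_growth a Q a4 Q0) xt xstar.
change (phi g eta t) with (@radial _ F d); rewrite enorm_sq /Sv -/a sqr_sqrtr; last lra.
set M := Num.max (enorm xstar) (enorm xt) in lower *.
set n := dotv (xstar - xt) (xstar - xt) in lower upper *.
exists M; split; first by rewrite lexx andbT ge_min le_max lexx.
have n0 : 0 <= n := dotvv_ge0 _.
have m0 : 0 <= min1inv M by rewrite min1inv_ge0 // le_max enorm_ge0.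
split; [apply: le_trans _ lower | apply: le_trans upper _].
  have S2 : 2 <= Num.sqrt a by rewrite -[2]ger0_norm // -sqrtr_sqr ler_sqrt; lra.
  have inv4 : (Num.sqrt a + 2)^-1 <= 4^-1 by rewrite lef_pV2 ?posrE; lra.
  rewrite -mulrA -[n * _ / 4]mulrA ler_wpM2l // mulrC ler_wpM2l //.
rewrite /c expRN invrK.
by have := mulr_ge0 (mulr_ge0 n0 Q0) (expR_ge0 Q); lra.
Qed.
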